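(* Let $L\ge2$, $k\ge2$ be integers, $\kappa:\{1,\dots,k-1\}\times\mathbb{N}\to\{0,\dots,L-1\}$ a map, and let $(a(n))_{n=0}^\infty$ be an $(L,k,\kappa)$-TM sequence. Then $(a(n))_{n=0}^\infty$ is ultimately periodic if and only if there exists an integer $A\ge0$ such that $$\kappa(s,A+y)\equiv\kappa(1,A)\,s\,k^y\pmod L$$ for all $1\le s\le k-1$ and all $y\in\mathbb{N}$. Moreover, if $(a(n))_{n=0}^\infty$ is not ultimately periodic, then none of its equally spaced subsequences $(a(N+tl))_{t=0}^\infty$ ($N\ge0$, $l>0$) is ultimately periodic.
   Context: $\mathbb{N}$ is the set of non-negative integers. Let $a_0,\dots,a_{L-1}$ be pairwise distinct complex numbers and $f$ the map on $\{a_0,\dots,a_{L-1}\}$ with $f(a_i)=a_{i+1}$ (indices mod $L$), extended letterwise to finite words; $f^j$ is its $j$-fold iterate, $f^0$ the identity. Define $A_0=a_0$ and $A_{n+1}=A_n\,f^{\kappa(1,n)}(A_n)\cdots f^{\kappa(k-1,n)}(A_n)$ (concatenation); $A_n$ is a prefix of $A_{n+1}$ and the infinite word $\lim A_n$, indexed from $0$, is the $(L,k,\kappa)$-TM sequence. A sequence $(b(n))$ is ultimately periodic if there are $N\ge0$, $l>0$ with $b(n)=b(n+l)$ for all $n\ge N$. *)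

From mathcomp Require Import all_boot all_order all_algebra.
From mathcomp Require Import complex Rstruct.
From Stdlib Require Import Rdefinitions.

Set Implicit Arguments.
Unset Strict Implicit.
Unset Printing Implicit Defensive.

Definition CC : Type := complex R.

(* Letters a_0,...,a_{L-1} are represented by their indices i < L;
   f^j (a_i) = a_{(i+j) mod L}, extended letterwise to words. *)
Definition fpow (L j : nat) (w : seq nat) : seq nat :=
  map (fun i => (i + j) %% L) w.

Fixpoint TMword (L k : nat) (kappa : nat -> nat -> nat) (n : nat) : seq nat :=
  match n with
  | 0 => [:: 0]
  | n'.+1 =>
      let W := TMword L k kappa n' in
      W ++ flatten [seq fpow L (kappa s n') W | s <- iota 1 (k - 1)]
  end.

(* b is the infinite word lim A_n (with letters a_i), indexed from 0:
   every A_n is a prefix of b. *)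
Definition is_TM_sequence (L k : nat) (kappa : nat -> nat -> nat)
    (a : nat -> CC) (b : nat -> CC) : Prop :=
  forall n i, i < size (TMword L k kappa n) ->
    b i = a (nth 0 (TMword L k kappa n) i).

Definition ultimately_periodic (T : Type) (b : nat -> T) : Prop :=
  exists N l, 0 < l /\ forall n, N <= n -> b n = b (n + l).

(* The i-th letter of the word is a_c with c the residue mod L of the sum of
   kappa(d_y, y) over the base-k digits d_y of i, where kappa(0, y) = 0.
   If kappa(s, A + y) = kappa(1, A) s k^y mod L, then c(u + w k^A) =
   c(u) + kappa(1, A) w mod L for u < k^A, so L k^A is a period.
   Conversely, let b be ultimately periodic with period p along N + t l. Then
   b x = b z for all large x, z in the class of N mod l with x = z mod p l, so
   any two numbers congruent mod p l carry equal letters once a common small u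
   is added to both. Pick b0 > 0 with k^(J + b0) = k^J mod p l for all large J.
   Comparing the letters at u + (d+1) k^J and u + d k^J + k^(J + b0) gives
     kappa(d+1, J) = kappa(d, J) + kappa(1, J + b0)    if d + 1 < k,
     kappa(1, J+1) = kappa(k-1, J) + kappa(1, J + b0)  if d + 1 = k (a carry),
   modulo L; for d = 0 the first says that kappa(1, .) has period b0, and then
   kappa(d, J) = d kappa(1, J) and kappa(1, J+1) = k kappa(1, J) follow. *)

From mathcomp Require Import all_boot all_order all_algebra.
From mathcomp Require Import zify ring.

Set Implicit Arguments.
Unset Strict Implicit.
Unset Printing Implicit Defensive.

(* Block 0 of A_(j+1) is A_j itself, unshifted. *)
Definition shift_of (kappa : nat -> nat -> nat) (s j : nat) : nat :=
  if s is 0 then 0 else kappa s j.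

Lemma shift_of_pos kappa s j : 0 < s -> shift_of kappa s j = kappa s j.
Proof. by case: s. Qed.

Section ShiftSum.

Variables (k : nat) (kappa : nat -> nat -> nat).
Hypothesis k_gt0 : 0 < k.

(* The y-th base-k digit of a position x in A_t selects the block of
   A_(y+1) containing x, shifted by kappa(digit, y). *)
Definition shift_sum (j t x : nat) : nat :=
  \sum_(y < t) shift_of kappa ((x %/ k ^ y) %% k) (j + y).

Lemma shift_sum0 j x : shift_sum j 0 x = 0.
Proof. by rewrite /shift_sum big_ord0. Qed.

Lemma shift_sumS j t x :
  shift_sum j t.+1 x = shift_of kappa (x %% k) j + shift_sum j.+1 t (x %/ k).
Proof.
rewrite /shift_sum big_ord_recl expn0 divn1 addn0; congr (_ + _).
by apply: eq_bigr => i _; rewrite /bump /= expnS divnMA addnS.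
Qed.

Lemma shift_sum_of0 j t : shift_sum j t 0 = 0.
Proof. by rewrite /shift_sum big1 // => i _; rewrite div0n mod0n. Qed.

Lemma shift_sum_split j t t' u v : u < k ^ t ->
  shift_sum j (t + t') (u + v * k ^ t) = shift_sum j t u + shift_sum (j + t) t' v.
Proof.
elim: t j u => [|t IH] j u.
  by rewrite expn0 ltnS leqn0 => /eqP ->; rewrite shift_sum0 muln1 add0n addn0.
move=> u_lt; rewrite addSn !shift_sumS -addnA expnSr mulnA; congr (_ + _).
  by rewrite addnC modnMDl.
rewrite [u + _]addnC divnMDl // [_ * _ + _]addnC IH ?addSnnS //.
by rewrite ltn_divLR // -expnSr.
Qed.

Lemma shift_sum_widen j t t' x : x < k ^ t -> t <= t' ->
  shift_sum j t' x = shift_sum j t x.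
Proof.
move=> x_lt /subnKC <-.
by rewrite -[x in LHS]addn0 -(mul0n (k ^ t)) shift_sum_split // shift_sum_of0 addn0.
Qed.

Lemma shift_sum_digit j t d : d < k -> shift_sum j t.+1 d = shift_of kappa d j.
Proof. by move=> d_lt; rewrite shift_sumS modn_small // divn_small // shift_sum_of0 addn0. Qed.

Lemma shift_sum_top j t J u d : u < k ^ J -> d < k -> J < t ->
  shift_sum j t (u + d * k ^ J) = shift_sum j J u + shift_of kappa d (j + J).
Proof.
move=> u_lt d_lt J_lt; have -> : t = J + (t - J).-1.+1 by lia.
by rewrite shift_sum_split // shift_sum_digit.
Qed.

End ShiftSum.

Lemma ltn_add_mull K M u d : u < K -> d < M -> u + d * K < M * K.
Proof. by nia. Qed.

Lemma size_flatten_uniform (S T : Type) (F : S -> seq T) m s :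
  (forall x, size (F x) = m) -> size (flatten (map F s)) = size s * m.
Proof. by move=> sizeF; elim: s => //= x s IH; rewrite size_cat sizeF IH. Qed.

Lemma nth_flatten_uniform (S T : Type) (x0 : S) (y0 : T) (F : S -> seq T) m s q r :
  (forall x, size (F x) = m) -> q < size s -> r < m ->
  nth y0 (flatten (map F s)) (q * m + r) = nth y0 (F (nth x0 s q)) r.
Proof.
move=> sizeF; elim: s q => // x s IH [|q] /= q_lt r_lt; rewrite nth_cat sizeF.
  by rewrite mul0n add0n r_lt.
by rewrite mulSn -addnA ltnNge leq_addr /= addKn IH.
Qed.

Section TMword.

Variables (L k : nat) (kappa : nat -> nat -> nat).
Hypothesis k_gt0 : 0 < k.

Lemma size_TMword n : size (TMword L k kappa n) = k ^ n.
Proof.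
elim: n => //= n IH; rewrite size_cat IH (@size_flatten_uniform _ _ _ (k ^ n)).
  by rewrite size_iota expnS; case: (k) k_gt0 => // k' _; rewrite subSS subn0 mulSn.
by move=> s; rewrite size_map IH.
Qed.

Lemma nth_TMword n i : i < k ^ n ->
  nth 0 (TMword L k kappa n) i = shift_sum k kappa 0 n i %% L.
Proof.
elim: n i => [|n IH] i i_lt.
  by move: i_lt; rewrite expn0 ltnS leqn0 => /eqP ->; rewrite shift_sum0 mod0n.
rewrite /= nth_cat size_TMword; case: ltnP => [i_lt' | i_ge].
  by rewrite IH // (shift_sum_widen kappa k_gt0 _ i_lt').
have kn_gt0 : 0 < k ^ n by rewrite expn_gt0 k_gt0.
set j := i - k ^ n; set q := j %/ k ^ n.
have q_lt : q < k - 1.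
  by rewrite ltn_divLR // /j; move: i_lt; rewrite expnS; nia.
have i_eq : i = j %% k ^ n + q.+1 * k ^ n.
  by move: (divn_eq j (k ^ n)); rewrite mulSn /q /j; lia.
have sizeF s : size (fpow L (kappa s n) (TMword L k kappa n)) = k ^ n.
  by rewrite size_map size_TMword.
rewrite (divn_eq j (k ^ n)) (nth_flatten_uniform 0 _ sizeF) ?size_iota ?ltn_mod //.
rewrite nth_iota // /fpow (nth_map 0) ?size_TMword ?ltn_mod //.
rewrite IH ?ltn_mod // modnDml i_eq -[n.+1]addn1 shift_sum_split ?ltn_mod // add0n.
by rewrite shift_sum_digit ?shift_of_pos ?add1n //; lia.
Qed.

End TMword.

Definition TMletter (L k : nat) (kappa : nat -> nat -> nat) (i : nat) : nat :=
  nth 0 (TMword L k kappa i) i.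

Section TMletter.

Variables (L k : nat) (kappa : nat -> nat -> nat).
Hypothesis k_gt1 : 1 < k.

Let k_gt0 : 0 < k. Proof. exact: ltnW. Qed.

Lemma TMletterE t i : i < k ^ t -> TMletter L k kappa i = shift_sum k kappa 0 t i %% L.
Proof.
move=> i_lt; have i_lt' := ltn_expl i k_gt1.
rewrite /TMletter nth_TMword // -(shift_sum_widen kappa k_gt0 _ i_lt (leq_maxl t i)).
by rewrite (shift_sum_widen kappa k_gt0 _ i_lt' (leq_maxr t i)).
Qed.

Lemma TMletter_lt i : 0 < L -> TMletter L k kappa i < L.
Proof. by move=> L_gt0; rewrite (TMletterE (ltn_expl i k_gt1)) ltn_mod. Qed.

Lemma TM_sequence_letter (a b : nat -> CC) :
  is_TM_sequence L k kappa a b -> forall i, b i = a (TMletter L k kappa i).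
Proof. by move=> tm i; apply: tm; rewrite size_TMword //; apply: ltn_expl. Qed.

Lemma TMletter_two_digits J J' u d e :
  u < k ^ J -> d < k -> e < k -> J < J' ->
  TMletter L k kappa (u + d * k ^ J + e * k ^ J') =
  (shift_sum k kappa 0 J u + shift_of kappa d J + shift_of kappa e J') %% L.
Proof.
move=> u_lt d_lt e_lt J_lt.
have low_lt : u + d * k ^ J < k ^ J'.
  by apply: leq_trans (ltn_add_mull u_lt d_lt) _; rewrite -expnS leq_pexp2l.
rewrite (TMletterE (t := J'.+1)) ?expnS ?ltn_add_mull //.
by rewrite shift_sum_top // shift_sum_top // !add0n.
Qed.

End TMletter.

Definition kappa_linear_from (L k : nat) (kappa : nat -> nat -> nat) (A : nat) : Prop :=
  forall s y, 1 <= s <= k - 1 -> kappa s (A + y) = kappa 1 A * s * k ^ y %[mod L].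

Section Sufficiency.

Variables (L k A : nat) (kappa : nat -> nat -> nat).
Hypothesis k_gt1 : 1 < k.
Hypothesis lin : kappa_linear_from L k kappa A.

Let k_gt0 : 0 < k. Proof. exact: ltnW. Qed.

Lemma shift_sum_linear y t v : v < k ^ t ->
  shift_sum k kappa (A + y) t v = kappa 1 A * k ^ y * v %[mod L].
Proof.
elim: t y v => [|t IH] y v v_lt.
  by move: v_lt; rewrite expn0 ltnS leqn0 => /eqP ->; rewrite shift_sum0 muln0.
have digit : shift_of kappa (v %% k) (A + y) = kappa 1 A * (v %% k) * k ^ y %[mod L].
  case: (posnP (v %% k)) => [-> | d_gt0]; first by rewrite muln0.
  by rewrite shift_of_pos // lin // d_gt0 -ltnS subn1 prednK // ltn_mod.
rewrite shift_sumS -addnS -modnDm IH ?ltn_divLR -?expnSr // digit modnDm.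
by congr (_ %% _); rewrite {3}(divn_eq v k) expnS; ring.
Qed.

Lemma TMletter_high u w : u < k ^ A ->
  TMletter L k kappa (u + w * k ^ A) = (shift_sum k kappa 0 A u + kappa 1 A * w) %% L.
Proof.
move=> u_lt; have w_lt : u + w * k ^ A < k ^ (A + w).
  by rewrite expnD [k ^ A * _]mulnC ltn_add_mull //; apply: ltn_expl.
rewrite (TMletterE _ _ k_gt1 w_lt) shift_sum_split // add0n -modnDmr.
have := shift_sum_linear 0 (ltn_expl w k_gt1); rewrite addn0 expn0 muln1 => ->.
by rewrite modnDmr.
Qed.

Lemma TMletter_periodic m : TMletter L k kappa (m + L * k ^ A) = TMletter L k kappa m.
Proof.
have kA_gt0 : 0 < k ^ A by rewrite expn_gt0 k_gt0.
have -> : m + L * k ^ A = m %% k ^ A + (m %/ k ^ A + L) * k ^ A.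
  by rewrite mulnDl addnA [_ %% _ + _]addnC -divn_eq.
rewrite [in RHS](divn_eq m (k ^ A)) [_ * _ + _ %% _]addnC !TMletter_high ?ltn_mod //.
by rewrite mulnDr addnA -modnDmr modnMl addn0.
Qed.

End Sufficiency.

Lemma ultimately_periodic_of_kappa_linear L k kappa A (a b : nat -> CC) :
  0 < L -> 1 < k -> is_TM_sequence L k kappa a b -> kappa_linear_from L k kappa A ->
  ultimately_periodic b.
Proof.
move=> L_gt0 k_gt1 tm lin; exists 0, (L * k ^ A); split.
  by rewrite muln_gt0 L_gt0 expn_gt0 ltnW.
by move=> n _; rewrite !(TM_sequence_letter k_gt1 tm) TMletter_periodic.
Qed.

Lemma eq_periodic_modn (T : Type) (f : nat -> T) p :
  (forall t, f (t + p) = f t) -> forall t t', t = t' %[mod p] -> f t = f t'.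
Proof.
move=> f_per; have f_mod t : f t = f (t %% p).
  rewrite {1}(divn_eq t p) addnC; elim: (t %/ p) => [|q IH]; first by rewrite addn0.
  by rewrite mulSnr addnA f_per.
by move=> t t' tt'; rewrite f_mod tt' -f_mod.
Qed.

Lemma expn_modn_eventually_periodic k P : 0 < P ->
  exists a0 b0, 0 < b0 /\ forall J, a0 <= J -> k ^ (J + b0) = k ^ J %[mod P].
Proof.
move=> P_gt0; set s := [seq k ^ j %% P | j <- iota 0 P.+1].
have /(uniqPn 0) [i [j [ij j_lt eq_ij]]] : ~~ uniq s.
  apply/negP => s_uniq; have s_sub : {subset s <= iota 0 P}.
    by move=> _ /mapP[j _ ->]; rewrite mem_iota ltn_mod P_gt0.
  by have := uniq_leq_size s_uniq s_sub; rewrite size_map !size_iota ltnn.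
move: j_lt eq_ij; rewrite size_map size_iota => j_lt.
rewrite !(nth_map 0) ?size_iota ?(ltn_trans ij) // !nth_iota ?(ltn_trans ij) // !add0n.
move=> rep; exists i, (j - i); split; first by rewrite subn_gt0.
move=> J /subnKC <-; rewrite -addnA [_ + (j - i)]addnC addnA subnKC ?(ltnW ij) //.
by rewrite !expnD -modnMml -rep modnMml.
Qed.

Lemma progression_shift_congr (T : Type) (b : nat -> T) N l :
  0 < l -> ultimately_periodic (fun t => b (N + t * l)) ->
  exists n0 P, 0 < P /\
    forall X Z, X = Z %[mod P] -> exists2 u, u < n0 & b (u + X) = b (u + Z).
Proof.
move=> l_gt0 [T0 [p [p_gt0 per]]].
pose c t := b (N + T0 * l + t * l).
have c_congr : forall t t', t = t' %[mod p] -> c t = c t'.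
  apply: eq_periodic_modn => t; rewrite /c -!addnA -!mulnDl addnA.
  by rewrite -per ?leq_addr.
exists (N + T0 * l + l), (p * l); split; first by rewrite muln_gt0 p_gt0.
move=> X Z XZ; pose r := (l - X %% l) %% l.
exists (N + T0 * l + r); first by rewrite ltn_add2l ltn_mod.
have rX : l %| r + X.
  by rewrite /dvdn modnDml -modnDmr subnK ?modnn // ltnW ?ltn_mod.
have rZ : l %| r + Z.
  have l_dvd : l %| p * l by apply: dvdn_mull.
  by rewrite /dvdn -modnDmr -(modn_dvdm Z l_dvd) -XZ modn_dvdm // modnDmr.
have b_c x : l %| r + x -> b (N + T0 * l + r + x) = c ((r + x) %/ l).
  by move=> rx; rewrite /c divnK // addnA.
rewrite !b_c //; apply: c_congr; apply/eqP.
rewrite -(eqn_pmul2r l_gt0) !muln_modl !divnK //; apply/eqP.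
by rewrite -modnDmr XZ modnDmr.
Qed.

Section Necessity.

Variables (L k P A0 : nat) (kappa : nat -> nat -> nat).
Hypotheses (k_gt1 : 1 < k) (P_gt0 : 0 < P).
Hypothesis letter_congr : forall J X Z, A0 <= J -> X = Z %[mod P] ->
  exists2 u, u < k ^ J & TMletter L k kappa (u + X) = TMletter L k kappa (u + Z).

Let k_gt0 : 0 < k. Proof. exact: ltnW. Qed.

Let k_pred_lt : k.-1 < k. Proof. by rewrite ltn_predL. Qed.

Lemma kappa_linear_of_letter_congr : exists A, kappa_linear_from L k kappa A.
Proof.
have [a0 [b0 [b0_gt0 kJ]]] := expn_modn_eventually_periodic k P_gt0.
pose A := A0 + a0.
have tail_congr J d : A <= J -> d < k -> exists2 u, u < k ^ J &
    TMletter L k kappa (u + d.+1 * k ^ J) =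
    (shift_sum k kappa 0 J u + shift_of kappa d J + kappa 1 (J + b0)) %% L.
  move=> AJ d_lt; have XZ : d.+1 * k ^ J = d * k ^ J + 1 * k ^ (J + b0) %[mod P].
    by rewrite mulSn addnC mul1n -[RHS]modnDmr kJ ?modnDmr // (leq_trans (leq_addl A0 a0)).
  have [u u_lt eq_u] := letter_congr (leq_trans (leq_addr a0 A0) AJ) XZ.
  by exists u => //; rewrite eq_u addnA TMletter_two_digits //; lia.
have digit_step J d : A <= J -> d.+1 < k ->
    shift_of kappa d.+1 J = shift_of kappa d J + kappa 1 (J + b0) %[mod L].
  move=> AJ d_lt; have [u u_lt] := tail_congr J d AJ (ltnW d_lt).
  have -> : u + d.+1 * k ^ J = u + d.+1 * k ^ J + 0 * k ^ J.+1 by rewrite addn0.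
  rewrite TMletter_two_digits // addn0 -addnA.
  by move/eqP; rewrite eqn_modDl => /eqP.
have carry_step J : A <= J ->
    kappa 1 J.+1 = shift_of kappa k.-1 J + kappa 1 (J + b0) %[mod L].
  move=> AJ; have [u u_lt] := tail_congr J k.-1 AJ k_pred_lt.
  have -> : u + k.-1.+1 * k ^ J = u + 0 * k ^ J + 1 * k ^ J.+1.
    by rewrite prednK // addn0 mul1n expnS.
  rewrite TMletter_two_digits // addn0 -addnA.
  by move/eqP; rewrite eqn_modDl => /eqP.
have kappa1_period J : A <= J -> kappa 1 (J + b0) = kappa 1 J %[mod L].
  by move=> AJ; rewrite (digit_step J 0 AJ k_gt1).
have shift_of_linear J d : A <= J -> d < k -> shift_of kappa d J = d * kappa 1 J %[mod L].
  elim: d => [//|d IH] AJ d_lt.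
  by rewrite digit_step // -modnDm (IH AJ (ltnW d_lt)) kappa1_period // modnDm mulSnr.
have kappa1_geometric y : kappa 1 (A + y) = kappa 1 A * k ^ y %[mod L].
  elim: y => [|y IH]; first by rewrite addn0 muln1.
  rewrite addnS carry_step ?leq_addr // -modnDm shift_of_linear ?leq_addr ?ltn_predL //.
  rewrite kappa1_period ?leq_addr // modnDm -mulSnr prednK // -modnMmr IH modnMmr.
  by rewrite expnS mulnCA.
exists A => s y /andP[s_gt0 s_le].
have s_lt : s < k by move: s_le; rewrite subn1 -ltnS prednK.
rewrite -(shift_of_pos kappa (A + y) s_gt0) shift_of_linear ?leq_addr //.
by rewrite -modnMmr kappa1_geometric modnMmr mulnCA mulnA.
Qed.

End Necessity.

Lemma kappa_linear_of_progression L k kappa (a b : nat -> CC) N l :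
  0 < L -> 1 < k -> (forall i j, i < L -> j < L -> a i = a j -> i = j) ->
  is_TM_sequence L k kappa a b -> 0 < l ->
  ultimately_periodic (fun t => b (N + t * l)) -> exists A, kappa_linear_from L k kappa A.
Proof.
move=> L_gt0 k_gt1 a_inj tm l_gt0 /(progression_shift_congr l_gt0) [n0 [P [P_gt0 congr]]].
apply: (@kappa_linear_of_letter_congr L k P n0) => // J X Z n0_le XZ.
have [u u_lt eq_b] := congr X Z XZ.
exists u; last first.
  move: eq_b; rewrite !(TM_sequence_letter k_gt1 tm) => /a_inj.
  by apply; apply: TMletter_lt.
apply: leq_trans u_lt (leq_trans (ltnW (ltn_expl n0 k_gt1)) _).
by rewrite leq_pexp2l // ltnW.
Qed.

Theorem theorem3p1 (L k : nat) (kappa : nat -> nat -> nat)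
    (a : nat -> CC) (b : nat -> CC) :
  2 <= L -> 2 <= k ->
  (forall s n, 1 <= s <= k - 1 -> kappa s n < L) ->
  (forall i j, i < L -> j < L -> a i = a j -> i = j) ->
  is_TM_sequence L k kappa a b ->
  (ultimately_periodic b <->
     exists A : nat, forall s y, 1 <= s <= k - 1 ->
       kappa s (A + y) = kappa 1 A * s * k ^ y %[mod L])
  /\
  (~ ultimately_periodic b ->
     forall N l, 0 < l -> ~ ultimately_periodic (fun t => b (N + t * l))).
Proof.
move=> L_ge2 k_gt1 _ a_inj tm; have L_gt0 : 0 < L by apply: ltnW.
have linear_of_progression := kappa_linear_of_progression L_gt0 k_gt1 a_inj tm.
have periodic_of_linear A :=
  @ultimately_periodic_of_kappa_linear L k kappa A a b L_gt0 k_gt1 tm.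
split; first split.
- case=> N [l [l_gt0 per]]; apply: (linear_of_progression 0 1) => //.
  by exists N, l; split=> // n; rewrite !add0n !muln1; apply: per.
- by case=> A /periodic_of_linear.
- move=> not_per N l l_gt0 /(linear_of_progression N l l_gt0) [A].
  by move/periodic_of_linear.
Qed.
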